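(* Let $G=(V,E)$ be a finite, undirected, unweighted, connected graph with $n=|V|$, and let $k$ be the length of a shortest walk in $G$ visiting every vertex at least once. The CNOT cost of the QFT circuit produced by the construction in the context is at most $3kn-2n$.
   Context: A walk is a sequence $(u_1,\dots,u_h)$ of vertices with consecutive entries adjacent (repetitions allowed), of length $h$. Each vertex carries one physical qubit; two-qubit gates only act on qubits at adjacent vertices. Gates: Hadamard $H$; controlled phase $CR_d=\mathrm{diag}(1,1,1,e^{i\pi/2^{d-1}})$; SWAP. Construction: let $P$ be a shortest walk in $G$ visiting all vertices. Place logical qubit $r$ ($1\le r\le n$) on the $r$-th distinct vertex of $P$ in order of first occurrence; whenever a SWAP is applied the logical qubits on its two vertices exchange places. Let $R=V$. For $r=1,\dots,n$: let $P'=(u_1,\dots,u_{k'})$ be $P$ if $r=1$, and otherwise a shortest walk in the induced subgraph $G[R]$ that starts at the vertex currently holding logical qubit $r$ and visits every vertex of $R$. Cascade $r$: apply $H$ to $u_1$; $j=1$, $U=\emptyset$; while $j\le k'-1$: (i) if $u_{j+1}\notin U$, apply $CR_d$ with control $u_{j+1}$, target $u_j$, where $d$ is (index of the logical qubit on $u_{j+1}$) $-\,r$, and add $u_{j+1}$ to $U$; (ii) if $j\le k'-2$ and $u_{j+2}=u_j$, set $j\leftarrow j+2$; otherwise, if $k'\ne 2$ apply SWAP to $u_j,u_{j+1}$, and set $j\leftarrow j+1$. After cascade $r$, remove from $R$ the vertex holding logical qubit $r$. CNOT cost: number of CNOTs after decomposition, counting $H$ as 0, each $CR_d$ as 2, each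 SWAP as 3, and a $CR_d$ immediately followed by a SWAP on the same two qubits as 3 in total. *)

From mathcomp Require Import all_boot all_algebra.

Set Implicit Arguments.
Unset Strict Implicit.
Unset Printing Implicit Defensive.

Section QFTDefs.
Variable T : finType.
Variable e : rel T.

(* A walk (u_1,...,u_h), h >= 1, consecutive entries adjacent; its length is h = size s. *)
Definition is_walk (s : seq T) : bool :=
  if s is x :: s' then path e x s' else false.

Definition walk_in (R : {set T}) (s : seq T) : bool :=
  is_walk s && all (fun x => x \in R) s.

Definition covers (R : {set T}) (s : seq T) : bool :=
  [forall x in R, x \in s].

Definition shortest_cover_walk (R : {set T}) (s : seq T) : Prop :=
  [/\ walk_in R s, covers R s &
      forall s', walk_in R s' -> covers R s' -> size s <= size s'].

Definition shortest_cover_walk_from (R : {set T}) (v : T) (s : seq T) : Prop :=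
  [/\ walk_in R s, covers R s, ohead s = Some v &
      forall s', walk_in R s' -> covers R s' -> ohead s' = Some v ->
                 size s <= size s'].

Definition min_cover_length (k : nat) : Prop :=
  (exists s, [/\ walk_in setT s, covers setT s & size s = k]) /\
  (forall s, walk_in setT s -> covers setT s -> k <= size s).

Inductive gate :=
| GH of T
| GCR of int & T & T     (* GCR d control target *)
| GSWAP of T & T.

(* placement: vertex |-> index of the logical qubit it holds *)
Definition swap_pl (pl : T -> nat) (a b : T) : T -> nat :=
  fun x => if x == a then pl b else if x == b then pl a else pl x.

(* The while-loop of cascade r, run on the suffix l = (u_j, ..., u_k') of P';
   sw = (k' != 2); U the set of already used controls. *)
Fixpoint casc_loop (r : nat) (sw : bool) (U : {set T}) (pl : T -> nat)
    (l : seq T) : seq gate * (T -> nat) :=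
  match l with
  | uj :: tl =>
    match tl with
    | uj1 :: rest =>
      let g1 := if uj1 \in U then [::]
                else [:: GCR ((pl uj1)%:Z - r%:Z) uj1 uj] in
      let U' := uj1 |: U in
      if (if rest is uj2 :: _ then uj2 == uj else false)
      then let res := casc_loop r sw U' pl rest in (g1 ++ res.1, res.2)
      else let g2 := if sw then [:: GSWAP uj uj1] else [::] in
           let pl1 := if sw then swap_pl pl uj uj1 else pl in
           let res := casc_loop r sw U' pl1 tl in (g1 ++ g2 ++ res.1, res.2)
    | [::] => ([::], pl)
    end
  | [::] => ([::], pl)
  end.

Definition cascade (r : nat) (w : seq T) (pl : T -> nat) : seq gate * (T -> nat) :=
  let res := casc_loop r (size w != 2) set0 pl w in
  ((if w is u1 :: _ then GH u1 :: res.1 else res.1), res.2).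

(* Running cascades r, r+1, ... with the walks Ps (the first one being P'
   for cascade r); R is the current vertex set, pl the current placement. *)
Fixpoint run (r : nat) (R : {set T}) (pl : T -> nat) (Ps : seq (seq T))
    : seq gate :=
  match Ps with
  | [::] => [::]
  | w :: Ps' =>
    let res := cascade r w pl in
    res.1 ++ run r.+1 [set x in R | res.2 x != r] res.2 Ps'
  end.

(* Validity of the choices: for r >= 2, P' is a shortest walk in G[R] starting
   at the vertex currently holding logical qubit r and visiting all of R. *)
Fixpoint run_ok (r : nat) (R : {set T}) (pl : T -> nat) (Ps : seq (seq T))
    : Prop :=
  match Ps with
  | [::] => True
  | w :: Ps' =>
    let res := cascade r w pl in
    (r = 1 \/ exists v, pl v = r /\ shortest_cover_walk_from R v w) /\
    run_ok r.+1 [set x in R | res.2 x != r] res.2 Ps'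
  end.

(* initial placement: logical qubit r on the r-th distinct vertex of P *)
Definition init_pl (P : seq T) : T -> nat :=
  fun x => (index x (undup P)).+1.

Fixpoint cnot_cost (gs : seq gate) : nat :=
  match gs with
  | [::] => 0
  | g :: tl =>
    match g with
    | GH _ => cnot_cost tl
    | GSWAP _ _ => 3 + cnot_cost tl
    | GCR _ c t =>
      match tl with
      | GSWAP a b :: rest =>
        if ((a == c) && (b == t)) || ((a == t) && (b == c))
        then 3 + cnot_cost rest else 2 + cnot_cost tl
      | _ => 2 + cnot_cost tl
      end
    end
  end.

End QFTDefs.

From mathcomp Require Import all_boot all_algebra fingroup perm zify.

(* A cascade along a walk of length h costs at most 3(h-1) CNOTs: each advance
   by one vertex costs a SWAP, possibly merged with the preceding CR_d (3), and
   each skip over a back-and-forth u_j u_{j+1} u_j costs one CR_d (2) for two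
   positions.  The first cascade follows P, of length k.  For r >= 2 the walk is
   a shortest covering walk of G[R]; rebuilding any covering walk so that each
   new vertex is reached by a back-and-forth detour from an earlier one gives a
   covering walk with at most 2|R| - 1 vertices, so cascade r costs at most
   6(|R| - 1).  Since SWAPs only permute the logical qubits among the vertices
   of R, the vertex holding qubit r is in R and R shrinks at every cascade; the
   later cascades thus cost at most 3(n-1)(n-2) in total, and
   3(k-1) + 3(n-1)(n-2) <= 3kn - 2n as n <= k. *)

Set Implicit Arguments.
Unset Strict Implicit.
Unset Printing Implicit Defensive.

Lemma cascades_cost_arith m m' a C :
  m' < m -> a <= 2 * m.-1 -> C <= 3 * m' * m'.-1 -> 3 * a + C <= 3 * m * m.-1.
Proof.
move=> m'_lt_m a_le C_le.
have : m' * m'.-1 <= m.-1 * m.-2 by apply: leq_mul; lia.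
by case: m m'_lt_m a_le => // m; rewrite succnK; nia.
Qed.

Lemma qft_cost_arith k n m C : n <= k -> 0 < n -> m < n -> C <= 3 * m * m.-1 ->
  3 * k.-1 + C <= 3 * k * n - 2 * n.
Proof.
move=> n_le_k n_pos m_lt_n C_le.
have : m * m.-1 <= n.-1 * n.-2 by apply: leq_mul; lia.
have : n * n.-1 <= k * n.-1 by apply: leq_mul.
by case: n k n_le_k m_lt_n n_pos => [|n] [|k] //; rewrite !succnK; nia.
Qed.

Section Cascade.
Variable T : finType.
Implicit Types (pl : T -> nat) (U R S : {set T}) (l w : seq T) (X : seq (gate T)).

Lemma cnot_cost_CR d (c t : T) X : cnot_cost (GCR d c t :: X) <= 2 + cnot_cost X.
Proof.
case: X => [|[] //= a b X] //.
by case: ifP => _ //; rewrite addnA leq_add2r.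
Qed.

Lemma cnot_cost_CR_SWAP d (c t : T) X :
  cnot_cost (GCR d c t :: GSWAP t c :: X) = 3 + cnot_cost X.
Proof. by rewrite /= !eqxx orbT. Qed.

Lemma cnot_cost_optCR b d (c t : T) X :
  cnot_cost ((if b then [::] else [:: GCR d c t]) ++ X) <= 2 + cnot_cost X.
Proof. by case: b; [exact: leq_addl | exact: cnot_cost_CR]. Qed.

Lemma cnot_cost_optCR_SWAP b d (c t : T) X :
  cnot_cost ((if b then [::] else [:: GCR d c t]) ++ GSWAP t c :: X) = 3 + cnot_cost X.
Proof. by case: b; last exact: cnot_cost_CR_SWAP. Qed.

Lemma casc_loop_skip r sw U pl uj uj1 uj2 rest : uj2 = uj ->
  casc_loop r sw U pl [:: uj, uj1, uj2 & rest] =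
  let res := casc_loop r sw (uj1 |: U) pl (uj2 :: rest) in
  ((if uj1 \in U then [::] else [:: GCR ((pl uj1)%:Z - r%:Z) uj1 uj]) ++ res.1,
   res.2).
Proof. by move=> ->; rewrite /= eqxx. Qed.

Lemma casc_loop_swap r sw U pl uj uj1 rest :
  ~~ (if rest is uj2 :: _ then uj2 == uj else false) ->
  casc_loop r sw U pl [:: uj, uj1 & rest] =
  let pl1 := if sw then swap_pl pl uj uj1 else pl in
  let res := casc_loop r sw (uj1 |: U) pl1 (uj1 :: rest) in
  ((if uj1 \in U then [::] else [:: GCR ((pl uj1)%:Z - r%:Z) uj1 uj]) ++
     (if sw then [:: GSWAP uj uj1] else [::]) ++ res.1,
   res.2).
Proof. by case: rest => [|uj2 rest] //= /negbTE ->. Qed.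

Local Arguments casc_loop : simpl never.

Lemma casc_loop_cost r sw U pl l X :
  cnot_cost ((casc_loop r sw U pl l).1 ++ X) <= 3 * (size l).-1 + cnot_cost X.
Proof.
move: {2}(size l) (leqnn (size l)) => n.
elim: n l U pl => [|n IH] [|uj [|uj1 rest]] U pl //=; rewrite ltnS => size_le.
case: (boolP (if rest is uj2 :: _ then uj2 == uj else false)) => [skip|step].
- case: rest skip size_le => [|uj2 rest] // /eqP skip size_le.
  rewrite casc_loop_skip //= -catA.
  apply: leq_trans (cnot_cost_optCR _ _ _ _ _) _.
  have := IH (uj2 :: rest) (uj1 |: U) pl (ltnW size_le); rewrite /=; lia.
- rewrite casc_loop_swap //=.
  have {}IH pl' := IH (uj1 :: rest) (uj1 |: U) pl' size_le; rewrite /= in IH.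
  case: sw IH => IH.
  + rewrite -!catA cat1s cnot_cost_optCR_SWAP.
    have := IH (swap_pl pl uj uj1); lia.
  + rewrite -!catA cat0s; apply: leq_trans (cnot_cost_optCR _ _ _ _ _) _.
    have := IH pl; lia.
Qed.

Lemma swap_plE pl (a b : T) : swap_pl pl a b =1 pl \o tperm a b.
Proof.
move=> x; rewrite /swap_pl /=.
case: tpermP => [->|->|/eqP/negbTE-> /eqP/negbTE->]; rewrite ?eqxx //.
by case: eqP => [->|].
Qed.

Lemma casc_loop_placement r sw U pl l S : {subset l <= S} ->
  exists2 s : {perm T}, perm_on S s & (casc_loop r sw U pl l).2 =1 pl \o s.
Proof.
move: {2}(size l) (leqnn (size l)) => n.
elim: n l U pl => [|n IH] [|uj [|uj1 rest]] U pl //= size_le l_sub;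
  try by exists 1%g => [|x]; rewrite ?perm_on1 //= perm1.
rewrite ltnS in size_le.
have rest_sub : {subset uj1 :: rest <= S}.
  by move=> x x_in; apply: l_sub; rewrite inE x_in orbT.
case: (boolP (if rest is uj2 :: _ then uj2 == uj else false)) => [skip|step].
- case: rest skip size_le l_sub rest_sub => [|uj2 rest] // /eqP skip size_le _ sub.
  rewrite casc_loop_skip //=; apply: IH (ltnW size_le) _.
  by move=> x x_in; apply: sub; rewrite inE x_in orbT.
- rewrite casc_loop_swap //=; case: sw IH => IH; last exact: IH.
  have [s s_on Es] := IH (uj1 :: rest) (uj1 |: U) (swap_pl pl uj uj1) size_le rest_sub.
  have t_on : perm_on S (tperm uj uj1).
    apply: subset_trans (tperm_on uj uj1) _; apply/subsetP => x.
    by rewrite !inE => /orP[]/eqP->; apply: l_sub; rewrite !inE eqxx ?orbT.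
  exists (s * tperm uj uj1)%g; first exact: perm_onM.
  by move=> x; rewrite Es /= swap_plE /= permM.
Qed.

Lemma cascade_cost r w pl X :
  cnot_cost ((cascade r w pl).1 ++ X) <= 3 * (size w).-1 + cnot_cost X.
Proof. by rewrite /cascade; case: w => [|u w]; exact: casc_loop_cost. Qed.

Lemma cascade_card_lt r w pl R v : {subset w <= R} -> v \in R -> pl v = r ->
  #|[set x in R | (cascade r w pl).2 x != r]| < #|R|.
Proof.
move=> wR vR plv; have [s sR Es] := casc_loop_placement r (size w != 2) set0 pl wR.
apply: proper_card; apply/properP; split.
  by apply/subsetP => x; rewrite inE => /andP[].
exists (s^-1 v)%g; first by rewrite -(perm_closed _ sR) permKV.
by rewrite inE /cascade /= Es /= permKV plv eqxx andbF.
Qed.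

Lemma run_cons r R pl w Ps :
  run r R pl (w :: Ps) =
  (cascade r w pl).1 ++
  run r.+1 [set x in R | (cascade r w pl).2 x != r] (cascade r w pl).2 Ps.
Proof. by []. Qed.
End Cascade.

Section Graph.
Variables (T : finType) (e : rel T).
Hypothesis e_sym : symmetric e.

Lemma path_detour x y v c : e y x -> path e v c -> y \in v :: c ->
  exists c', [/\ path e v c', size c' = (size c).+2 & v :: c' =i x :: v :: c].
Proof.
move=> yx; elim: c v => [|u c IH] v vc yvc; have [yv|yNv] := eqVneq y v;
  [subst y; exists [:: x; v] | | subst y; exists [:: x, v, u & c] |].
1,3: split => //=; [by rewrite yx (e_sym x) yx |].
1,2: by move=> z; rewrite !inE; case: (z == v); case: (z == x).
  by rewrite mem_seq1 (negbTE yNv) in yvc.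
move: vc yvc => /= /andP[vu uc]; rewrite inE (negbTE yNv) => yuc.
have [c1 [uc1 size_c1 mem_c1]] := IH u uc yuc.
exists (u :: c1); split => /=; [by rewrite vu | by rewrite size_c1 |].
by move=> z; rewrite inE mem_c1 !inE; case: (z == v); case: (z == x).
Qed.

Lemma path_shorten v s : path e v s ->
  exists c, [/\ path e v c, v :: c =i v :: s & size c <= 2 * #|v :: s|.-1].
Proof.
elim/last_ind: s => [|s x IH]; first by exists [::].
rewrite rcons_path => /andP[vs lx].
have [c [vc cs size_c]] := IH vs.
have mem_x : v :: rcons s x =i [predU1 x & v :: s].
  by move=> z; rewrite !inE mem_rcons inE orbCA.
have card_x : #|v :: rcons s x| = (x \notin v :: s) + #|v :: s|.
  by rewrite (eq_card mem_x) cardU1.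
rewrite card_x.
have [xs|xNs] := boolP (x \in v :: s).
  exists c; split => // z; rewrite mem_x cs [in RHS]inE.
  by case: eqP => [->|//]; rewrite xs orbT.
have lc : last v s \in v :: c by rewrite cs mem_last.
have [c' [vc' size_c' mem_c']] := path_detour lx vc lc.
have card_pos : 0 < #|v :: s| by apply/card_gt0P; exists v; rewrite mem_head.
exists c'; split => //.
  by move=> z; rewrite mem_c' in_cons cs mem_x !inE.
by rewrite size_c' /=; move: #|v :: s| size_c card_pos => m; lia.
Qed.

Lemma covers_card (R : {set T}) s : covers R s -> #|R| <= size s.
Proof.
move=> covR; apply: leq_trans (card_size s); apply: subset_leq_card.
by apply/subsetP => z zR; exact: (forall_inP covR).
Qed.

Lemma shortest_cover_walk_from_size (R : {set T}) v w :
  shortest_cover_walk_from e R v w -> (size w).-1 <= 2 * #|R|.-1.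
Proof.
case: w => [|u s] [/andP[us sR] covR [uv] min_w] //; subst v.
have [c [uc cs size_c]] := path_shorten us.
have cR : walk_in e R (u :: c).
  by apply/andP; split; last (apply/allP => z zc; apply: (allP sR); rewrite -cs).
have cov_c : covers R (u :: c).
  by apply/forall_inP => z zR; rewrite cs; exact: (forall_inP covR).
have card_s : #|u :: s| <= #|R| by apply/subset_leq_card/subsetP/allP.
have := min_w _ cR cov_c (erefl _); move: #|u :: s| size_c card_s => m /=.
lia.
Qed.

Lemma run_cost r R pl Ps : 1 < r -> run_ok e r R pl Ps ->
  cnot_cost (run r R pl Ps) <= 3 * #|R| * #|R|.-1.
Proof.
elim: Ps r R pl => [|w Ps IH] r R pl r_gt1 //= [[r1|[v [plv shw]]] ok].
  by rewrite r1 in r_gt1.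
have wR : {subset w <= R} by case: shw => /andP[_ /allP].
have vR : v \in R.
  by apply: wR; case: shw => _ _; case: (w) => //= u w' [->] _; exact: mem_head.
have size_w := shortest_cover_walk_from_size shw.
have card_lt := cascade_card_lt wR vR plv.
have cost_rest := IH _ _ _ (leqW r_gt1) ok.
apply: leq_trans (cascade_cost _ _ _ _) _.
exact: cascades_cost_arith card_lt size_w cost_rest.
Qed.
End Graph.

Lemma init_pl_head (T : finType) x (P : seq T) :
  x \in P -> init_pl P (head x (undup P)) = 1.
Proof.
rewrite /init_pl -mem_undup.
by case: (undup P) => [|u U] //= _; rewrite eqxx.
Qed.

Theorem theorem6 (T : finType) (e : rel T)
  (e_sym : symmetric e) (e_irr : irreflexive e)
  (e_conn : forall x y : T, connect e x y)
  (k : nat) (hk : min_cover_length e k)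
  (P : seq T) (hP : shortest_cover_walk e setT P)
  (Ps : seq (seq T)) (hPs : size Ps = #|T|.-1)
  (hrun : run_ok e 1 setT (init_pl P) (P :: Ps)) :
  cnot_cost (run 1 setT (init_pl P) (P :: Ps)) <= 3 * k * #|T| - 2 * #|T|.
Proof.
have [[s [walk_s cov_s size_s]] min_k] := hk.
case: hP => walk_P cov_P min_P.
have size_P : size P = k by apply/eqP; rewrite eqn_leq min_k // andbT -size_s min_P.
have card_T : #|T| <= k by rewrite -size_P -cardsT; exact: covers_card.
have [x xP] : exists x, x \in P.
  by case: (P) walk_P => [|x P'] // _; exists x; rewrite mem_head.
have := cascade_card_lt (w := P) (fun y _ => in_setT y) (in_setT _) (init_pl_head xP).
rewrite cardsT => card_lt.
case: hrun => _ /(run_cost e_sym (ltnSn 1)) cost_rest.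
rewrite run_cons; apply: leq_trans (cascade_cost _ _ _ _) _; rewrite size_P.
have card_pos : 0 < #|T| by apply/card_gt0P; exists x.
exact: qft_cost_arith card_T card_pos card_lt cost_rest.
Qed.
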